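(* Let $X$ be a vector lattice and let $l : X \to \mathbb{R}$ be an order bounded linear functional. Then $\ker(l)$ is a Grothendieck subspace of $X$ if and only if the modulus $|l|$ of $l$ is the sum of some pair of Riesz homomorphisms $X \to \mathbb{R}$.
   Context: The modulus of an order bounded functional $l$ is $|l| = l \vee (-l)$ in the Riesz space of order bounded functionals. A Riesz homomorphism is a linear functional preserving finite lattice operations. A linear subspace $H$ of a vector lattice is called a Grothendieck subspace (or $G$-space) if for all $x, y \in H$ one has $x \vee y \vee 0 + x \wedge y \wedge 0 \in H$. *)

From HB Require Import structures.
From mathcomp Require Import all_boot all_order all_algebra.
From mathcomp Require Import reals.
Set Implicit Arguments. Unset Strict Implicit. Unset Printing Implicit Defensive.
Import Order.TTheory GRing.Theory Num.Theory.
Local Open Scope ring_scope.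

Record vector_lattice (R : realType) (X : lmodType R) := VectorLattice {
  vle : X -> X -> Prop;
  vjoin : X -> X -> X;
  vmeet : X -> X -> X;
  vle_refl : forall x, vle x x;
  vle_trans : forall x y z, vle x y -> vle y z -> vle x z;
  vle_anti : forall x y, vle x y -> vle y x -> x = y;
  vle_add : forall x y z, vle x y -> vle (x + z) (y + z);
  vle_scale : forall (a : R) x y, 0 <= a -> vle x y -> vle (a *: x) (a *: y);
  vjoin_ubl : forall x y, vle x (vjoin x y);
  vjoin_ubr : forall x y, vle y (vjoin x y);
  vjoin_least : forall x y z, vle x z -> vle y z -> vle (vjoin x y) z;
  vmeet_lbl : forall x y, vle (vmeet x y) x;
  vmeet_lbr : forall x y, vle (vmeet x y) y;
  vmeet_greatest : forall x y z, vle z x -> vle z y -> vle z (vmeet x y)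
}.

Section Defs.
Variables (R : realType) (X : lmodType R) (L : vector_lattice X).

Definition lin_functional (f : X -> R) : Prop :=
  forall (a : R) (x y : X), f (a *: x + y) = a * f x + f y.

Definition order_bounded (f : X -> R) : Prop :=
  forall x y : X, exists M : R,
    forall z, vle L x z -> vle L z y -> `|f z| <= M.

Definition order_bounded_functional (f : X -> R) : Prop :=
  lin_functional f /\ order_bounded f.

(* the (canonical) order of the space of order bounded functionals:
   f <= g iff g - f is positive *)
Definition func_le (f g : X -> R) : Prop :=
  forall x, vle L 0 x -> f x <= g x.

(* m is the modulus |l| = l \/ (-l), i.e. the supremum of l and -l in the
   ordered vector space of order bounded functionals *)
Definition is_modulus (l m : X -> R) : Prop :=
  [/\ order_bounded_functional m,
      func_le l m, func_le (fun x => - l x) m &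
      forall g, order_bounded_functional g -> func_le l g ->
        func_le (fun x => - l x) g -> func_le m g].

Definition riesz_hom (f : X -> R) : Prop :=
  [/\ lin_functional f,
      forall x y, f (vjoin L x y) = Num.max (f x) (f y) &
      forall x y, f (vmeet L x y) = Num.min (f x) (f y)].

Definition G_space (H : X -> Prop) : Prop :=
  [/\ H 0,
      (forall (a : R) x y, H x -> H y -> H (a *: x + y)) &
      forall x y, H x -> H y ->
        H (vjoin L (vjoin L x y) 0 + vmeet L (vmeet L x y) 0)].

Definition kernel (f : X -> R) : X -> Prop := fun x => f x = 0.

End Defs.

(* If |l| = φ + ψ with Riesz homomorphisms φ and ψ, then ker φ ∩ ker ψ lies in
   ker l, so l = a φ + b ψ.  A Riesz homomorphism maps x ∨ y ∨ 0 + x ∧ y ∧ 0 to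
   g(s, t) = max(s, t, 0) + min(s, t, 0) at the images of x and y, and
   g(c s, c t) = c g(s, t) for every real c, negative ones included; hence
   ker l is a G-space.

   Conversely, if ker l is a G-space, l cannot be nonzero on three pairwise
   disjoint positive elements p, q, r: rescaled, l takes values ±1 on them, two
   of these agree, say l p = l q, and the G-condition applied to p - q and
   p ∓ r produces an element of ker l on which l equals -l p.  By the
   Riesz-Kantorovich formula for l⁺ and the minimality of |l|, |l| vanishes at
   u ≥ 0 as soon as l vanishes on [0, u], so |l| has no such triple either.
   Finally, a positive functional f without such triples is a Riesz
   homomorphism unless f u, f v > 0 for some disjoint u, v ≥ 0; then
   x ↦ sup_t f(x ∧ t u) and x ↦ sup_t f(x ∧ t v) are Riesz homomorphisms with
   sum f, because for large t the excess (x - t u - t v)⁺ is disjoint from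
   (t u - x)⁺ and (t v - x)⁺, on which f does not vanish, so f kills it. *)

From mathcomp Require Import all_boot all_order all_algebra reals.
From mathcomp Require Import boolp classical_sets.
From mathcomp Require Import ring lra.
Import Order.TTheory GRing.Theory Num.Theory.
Local Open Scope ring_scope.
Local Open Scope classical_set_scope.

Lemma sup_range_eventually_const {R : realType} {g : R -> R} {t0 : R} :
  {homo g : s t / s <= t} -> (forall t, t0 <= t -> g t = g t0) ->
  sup (range g) = g t0.
Proof.
move=> g_mono g_const; have ub : ubound (range g) (g t0).
  move=> _ [t _ <-]; have [/g_const -> //|/ltW/g_mono //] := leP t0 t.
apply/eqP; rewrite eq_le ge_sup //=; last by exists (g t0), t0.
by apply: ub_le_sup; [exists (g t0)|exists t0].
Qed.

Definition gcomb {R : realDomainType} (s t : R) :=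
  Num.max (Num.max s t) 0 + Num.min (Num.min s t) 0.

Lemma gcombZ {R : realDomainType} (a s t : R) : gcomb (a * s) (a * t) = a * gcomb s t.
Proof.
rewrite /gcomb mulrDr; have [a_ge0|a_lt0] := lerP 0 a.
  by rewrite !maxr_pMr // !minr_pMr // !mulr0.
by rewrite !maxr_nMr ?ltW // !minr_nMr ?ltW // !mulr0 addrC.
Qed.

Lemma gcomb_lin_eq0 {R : realDomainType} (a b s1 t1 s2 t2 : R) :
  a * s1 + b * s2 = 0 -> a * t1 + b * t2 = 0 -> a * gcomb s1 t1 + b * gcomb s2 t2 = 0.
Proof.
move=> /eqP; rewrite addr_eq0 => /eqP s12 /eqP; rewrite addr_eq0 => /eqP t12.
by rewrite -!gcombZ s12 t12 -!mulNr !gcombZ mulNr addNr.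
Qed.

Section VectorLattice.
Context {R : realType} {X : lmodType R} (L : vector_lattice X).
Local Notation "x <=: y" := (vle L x y) (at level 70, no associativity).
Local Notation "x \vee y" := (vjoin L x y) (at level 45, left associativity).
Local Notation "x \wedge y" := (vmeet L x y) (at level 45, left associativity).
Local Notation vpos x := (x \vee 0).
Local Notation vneg x := (- x \vee 0).

#[local] Hint Resolve vle_refl vjoin_ubl vjoin_ubr vmeet_lbl vmeet_lbr : core.

Lemma vle_addr {x y} z : x <=: y -> x + z <=: y + z. Proof. exact: vle_add. Qed.

Lemma vle_addl {x y} z : x <=: y -> z + x <=: z + y.
Proof. by rewrite ![z + _]addrC; apply: vle_addr. Qed.

Lemma vle_add2 x y z w : x <=: y -> z <=: w -> x + z <=: y + w.
Proof. by move=> /(vle_addr z) xy /(vle_addl y); apply: vle_trans. Qed.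

Lemma addv_ge0 {x y} : 0 <=: x -> 0 <=: y -> 0 <=: x + y.
Proof. by move=> x0 y0; rewrite -(addr0 0); apply: vle_add2. Qed.

Lemma subv_ge0 x y : (0 <=: y - x) <-> (x <=: y).
Proof.
split=> [/(vle_addr x)|/(vle_addr (- x))]; first by rewrite add0r subrK.
by rewrite subrr.
Qed.

Lemma vle_opp x y : (- y <=: - x) <-> (x <=: y).
Proof.
split=> [/subv_ge0|/subv_ge0 yx]; first by rewrite opprK addrC => /subv_ge0.
by apply/subv_ge0; rewrite opprK addrC.
Qed.

Lemma scalev_ge0 {a : R} {x} : 0 <= a -> 0 <=: x -> 0 <=: a *: x.
Proof. by move=> a0 /(vle_scale a0); rewrite scaler0. Qed.

Lemma vle_scalel (a b : R) x : a <= b -> 0 <=: x -> a *: x <=: b *: x.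
Proof.
by move=> ab x0; apply/subv_ge0; rewrite -scalerBl; apply: scalev_ge0; rewrite ?subr_ge0.
Qed.

Lemma vjoinC x y : x \vee y = y \vee x.
Proof. by apply: vle_anti; apply: vjoin_least. Qed.

Lemma vmeetC x y : x \wedge y = y \wedge x.
Proof. by apply: vle_anti; apply: vmeet_greatest. Qed.

Lemma vjoin_r {x y} : x <=: y -> x \vee y = y.
Proof. by move=> xy; apply: vle_anti => //; apply: vjoin_least. Qed.

Lemma vjoin_l {x y} : y <=: x -> x \vee y = x.
Proof. by rewrite vjoinC; apply: vjoin_r. Qed.

Lemma vmeet_l {x y} : x <=: y -> x \wedge y = x.
Proof. by move=> xy; apply: vle_anti => //; apply: vmeet_greatest. Qed.

Lemma vleU2 x y z t : x <=: y -> z <=: t -> x \vee z <=: y \vee t.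
Proof.
by move=> xy zt; apply: vjoin_least; [apply: vle_trans xy _|apply: vle_trans zt _].
Qed.

Lemma vleI2 x y z t : x <=: y -> z <=: t -> x \wedge z <=: y \wedge t.
Proof.
by move=> xy zt; apply: vmeet_greatest; [apply: vle_trans _ xy|apply: vle_trans _ zt].
Qed.

Lemma vmeet_ge0 {x y} : 0 <=: x -> 0 <=: y -> 0 <=: x \wedge y.
Proof. exact: vmeet_greatest. Qed.

Lemma vleBrDr x y z : (x <=: y - z) <-> (x + z <=: y).
Proof.
by split=> [/(vle_addr z)|/(vle_addr (- z))]; rewrite ?subrK // addrK.
Qed.

Lemma vleBlDr x y z : (x - y <=: z) <-> (x <=: z + y).
Proof.
by split=> [/(vle_addr y)|/(vle_addr (- y))]; rewrite ?subrK // addrK.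
Qed.

Lemma vle_wpDr y x z : 0 <=: x -> y <=: z -> y <=: z + x.
Proof. by move=> x0 yz; rewrite -[y]addr0; apply: vle_add2. Qed.

Lemma vle_wpDl y x z : 0 <=: x -> y <=: z -> y <=: x + z.
Proof. by rewrite addrC; apply: vle_wpDr. Qed.

Lemma vjoinDr x y z : (x + z) \vee (y + z) = x \vee y + z.
Proof.
apply: vle_anti; first by apply: vjoin_least; apply: vle_addr.
by apply/vleBrDr; apply: vjoin_least; apply/vleBrDr.
Qed.

Lemma vjoinN x y : - (x \vee y) = - x \wedge - y.
Proof.
apply: vle_anti; first by apply: vmeet_greatest; apply/vle_opp.
by apply/vle_opp; rewrite opprK; apply: vjoin_least; apply/vle_opp; rewrite opprK.
Qed.

Lemma vmeetN x y : - (x \wedge y) = - x \vee - y.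
Proof. by rewrite -[x]opprK -[y]opprK -vjoinN !opprK. Qed.

Lemma vmeetDr x y z : (x + z) \wedge (y + z) = x \wedge y + z.
Proof. by apply: oppr_inj; rewrite vmeetN !opprD vjoinDr -vmeetN. Qed.

Lemma vle_pscale2 (a : R) x y : 0 < a -> (a *: x <=: a *: y) <-> (x <=: y).
Proof.
move=> a_gt0; split=> [axy|]; last exact/vle_scale/ltW.
have ai_ge0 : 0 <= a^-1 by rewrite invr_ge0 ltW.
by have := vle_scale ai_ge0 axy; rewrite !scalerA mulVf ?gt_eqF // !scale1r.
Qed.

Lemma vmeetZ (a : R) x y : 0 <= a -> a *: (x \wedge y) = a *: x \wedge a *: y.
Proof.
rewrite le_eqVlt => /predU1P[<-|a_gt0]; first by rewrite !scale0r vmeet_l.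
apply: vle_anti; first by apply: vmeet_greatest; apply/vle_pscale2.
have a_neq0 : a != 0 by rewrite gt_eqF.
rewrite -[X in X <=: _](scalerKV a_neq0); apply/vle_pscale2 => //.
by apply: vmeet_greatest; rewrite -[X in _ <=: X](scalerK a_neq0);
  apply: vle_scale; rewrite ?invr_ge0 ?ltW.
Qed.

Lemma vjoin_subl x y z : (x - y) \vee (x - z) = x - y \wedge z.
Proof. by rewrite !(addrC x) vjoinDr -vmeetN. Qed.

Lemma vmeet_subl x y z : (x - y) \wedge (x - z) = x - y \vee z.
Proof. by rewrite !(addrC x) vmeetDr -vjoinN. Qed.

Lemma addv_join_meet x y : x \vee y + x \wedge y = x + y.
Proof.
have -> : x \vee y = x + y - y \wedge x by rewrite -vjoin_subl addrK [x + y]addrC addrK.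
by rewrite vmeetC subrK.
Qed.

Lemma vnegE x : vneg x = vpos x - x.
Proof. by rewrite -vjoinDr subrr add0r vjoinC. Qed.

Lemma vpos_subneg x : vpos x - vneg x = x.
Proof. by rewrite vnegE opprB addrC subrK. Qed.

Lemma vpos_ge0 x : 0 <=: vpos x. Proof. exact: vjoin_ubr. Qed.

Lemma vneg_ge0 x : 0 <=: vneg x. Proof. exact: vjoin_ubr. Qed.

#[local] Hint Resolve vpos_ge0 vneg_ge0 : core.

Lemma vpos_id {x} : 0 <=: x -> vpos x = x.
Proof. exact: vjoin_l. Qed.

Lemma vmeet_pos_neg x : vpos x \wedge vneg x = 0.
Proof.
by rewrite vnegE -[X in X \wedge _]subr0 vmeet_subl vjoinC subrr.
Qed.

Lemma vpos_sub x y : vpos (x - y) = x - x \wedge y.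
Proof. by rewrite -[0](subrr x) vjoin_subl vmeetC. Qed.

Lemma vmeet0_sub_disjoint x y : x \wedge y = 0 -> (x - y) \wedge 0 = - y.
Proof. by move=> xy0; rewrite -[0](subrr y) vmeetDr xy0 add0r. Qed.

Lemma disjointW {x y x' y'} : x \wedge y = 0 ->
  0 <=: x' -> 0 <=: y' -> x' <=: x -> y' <=: y -> x' \wedge y' = 0.
Proof.
by move=> xy0 x'0 y'0 x'x y'y; apply: vle_anti; [rewrite -xy0; apply: vleI2|
  apply: vmeet_ge0].
Qed.

Lemma disjointZ {a b : R} {x y} : 0 <= a -> 0 <= b -> 0 <=: x -> 0 <=: y ->
  x \wedge y = 0 -> (a *: x) \wedge (b *: y) = 0.
Proof.
move=> a0 b0 x0 y0 xy0; have ab0 : 0 <= a + b by rewrite addr_ge0.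
apply: (@disjointW ((a + b) *: x) ((a + b) *: y)).
- by rewrite -vmeetZ // xy0 scaler0.
- exact: scalev_ge0.
- exact: scalev_ge0.
- by apply: vle_scalel; rewrite ?lerDl.
- by apply: vle_scalel; rewrite ?lerDr.
Qed.

Lemma vmeetDr_le {x y z} : 0 <=: x -> 0 <=: y -> 0 <=: z ->
  x \wedge (y + z) <=: x \wedge y + x \wedge z.
Proof.
move=> x0 y0 z0; set d := x \wedge (y + z).
have dx : d <=: x by exact: vmeet_lbl.
rewrite addrC; apply/vleBlDr; apply: vmeet_greatest.
  by apply/vleBlDr; apply: vle_wpDr dx; apply: vmeet_ge0.
rewrite vmeetN addrC -vjoinDr; apply: vjoin_least; rewrite addrC; apply/vleBlDr.
  exact: vle_wpDl dx.
by rewrite addrC; exact: vmeet_lbr.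
Qed.

Lemma vmeetD_disjoint x y z : 0 <=: x -> 0 <=: y -> 0 <=: z -> y \wedge z = 0 ->
  x \wedge (y + z) = x \wedge y + x \wedge z.
Proof.
move=> x0 y0 z0 yz0; apply: vle_anti; first exact: vmeetDr_le.
have xyz0 : (x \wedge y) \wedge (x \wedge z) = 0.
  by apply: (disjointW yz0); try apply: vmeet_ge0.
rewrite -addv_join_meet xyz0 addr0; apply: vjoin_least; apply: vleI2 => //.
  exact: vle_wpDr.
exact: vle_wpDl.
Qed.

Lemma vneg_vpos_disjoint x y : x <=: y -> vneg y \wedge vpos x = 0.
Proof.
move=> xy; have := vmeet_pos_neg y; rewrite vmeetC => /disjointW; apply=> //.
exact: vleU2.
Qed.

Lemma vmeet_scale_mono x u (s t : R) : 0 <=: u -> s <= t ->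
  x \wedge s *: u <=: x \wedge t *: u.
Proof. by move=> u0 st; apply: vleI2 => //; apply: vle_scalel. Qed.

Local Notation vgcomb x y := (x \vee y \vee 0 + x \wedge y \wedge 0).

Lemma vgcomb_sub_disjoint x y z : 0 <=: x -> 0 <=: y -> 0 <=: z ->
  x \wedge y = 0 -> x \wedge z = 0 -> y \wedge z = 0 ->
  vgcomb (x - y) (x - z) = x - y - z.
Proof.
move=> x0 y0 z0 xy0 xz0 yz0.
have yz : y \vee z = y + z by rewrite -addv_join_meet yz0 addr0.
have xyz0 : x \wedge (y + z) = 0.
  apply: vle_anti; last by apply: vmeet_ge0 => //; apply: addv_ge0.
  by have := vmeetDr_le x0 y0 z0; rewrite xy0 xz0 addr0.
by rewrite vjoin_subl vmeet_subl yz0 subr0 vpos_id // yz vmeet0_sub_disjoint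
  // opprD addrA.
Qed.

Lemma vgcomb_subadd_disjoint x y z : 0 <=: x -> 0 <=: y -> 0 <=: z ->
  x \wedge y = 0 -> vgcomb (x - y) (x + z) = x - y + z.
Proof.
move=> x0 y0 z0 xy0; have le_xy_xz : x - y <=: x + z.
  by apply: vle_addl; apply: vle_trans z0; rewrite -oppr0; apply/vle_opp.
rewrite (vjoin_r le_xy_xz) (vmeet_l le_xy_xz) vpos_id; last exact: addv_ge0.
by rewrite vmeet0_sub_disjoint // addrAC.
Qed.

Section LinearFunctional.
Context {f : X -> R} (f_lin : lin_functional f).

Lemma lfunD : {morph f : x y / x + y}.
Proof. by move=> x y; have := f_lin 1 x y; rewrite scale1r mul1r. Qed.

Lemma lfun0 : f 0 = 0.
Proof. by apply: (addrI (f 0)); rewrite -lfunD !addr0. Qed.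

Lemma lfunZ (a : R) x : f (a *: x) = a * f x.
Proof. by have := f_lin a x 0; rewrite !addr0 lfun0 addr0. Qed.

Lemma lfunN : {morph f : x / - x}.
Proof. by move=> x; rewrite -scaleN1r lfunZ mulN1r. Qed.

Lemma lfunB : {morph f : x y / x - y}.
Proof. by move=> x y; rewrite lfunD lfunN. Qed.

End LinearFunctional.

Lemma lin_functional_comb {f g : X -> R} (a b : R) :
  lin_functional f -> lin_functional g -> lin_functional (fun x => a * f x + b * g x).
Proof. by move=> f_lin g_lin c x y; rewrite f_lin g_lin; ring. Qed.

Lemma order_bounded_comb {f g : X -> R} (a b : R) :
  order_bounded L f -> order_bounded L g -> order_bounded L (fun x => a * f x + b * g x).
Proof.
move=> f_ob g_ob x y; have [M1 fM1] := f_ob x y; have [M2 gM2] := g_ob x y.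
exists (`|a| * M1 + `|b| * M2) => z xz zy.
apply: le_trans (ler_normD _ _) _; rewrite !normrM.
by apply: lerD; apply: ler_wpM2l => //; [apply: fM1|apply: gM2].
Qed.

Lemma lin_functional_factor (S : X -> Prop) {f g : X -> R} :
  lin_functional f -> lin_functional g ->
  (forall (a : R) x y, S x -> S y -> S (a *: x + y)) ->
  (forall x, S x -> f x = 0 -> g x = 0) -> exists c, forall x, S x -> g x = c * f x.
Proof.
move=> f_lin g_lin S_lin fg0.
have [[v Sv fv_neq0]|f0] := pselect (exists2 v, S v & f v != 0).
  exists (g v / f v) => x Sx.
  have := fg0 _ (S_lin (- (f x / f v)) _ _ Sv Sx).
  rewrite f_lin g_lin !mulNr divfK // addNr => /(_ erefl) /eqP.
  by rewrite addrC subr_eq0 => /eqP ->; ring.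
exists 0 => x Sx; rewrite mul0r; apply: fg0 => //.
by have [//|fx_neq0] := eqVneq (f x) 0; exfalso; apply: f0; exists x.
Qed.

Lemma lin_functional_span2 {f g h : X -> R} :
  lin_functional f -> lin_functional g -> lin_functional h ->
  (forall x, f x = 0 -> g x = 0 -> h x = 0) ->
  exists a b, forall x, h x = a * f x + b * g x.
Proof.
move=> f_lin g_lin h_lin fgh0.
have ker_lin (a : R) x y : f x = 0 -> f y = 0 -> f (a *: x + y) = 0.
  by move=> fx fy; rewrite f_lin fx fy mulr0 addr0.
have [b hb] := lin_functional_factor _ g_lin h_lin ker_lin fgh0.
have rest0 x : True -> f x = 0 -> 1 * h x + - b * g x = 0.
  by move=> _ fx; rewrite hb // mul1r mulNr subrr.
have [a ha] := lin_functional_factor (fun=> True) f_lin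
  (lin_functional_comb 1 (- b) h_lin g_lin) (fun _ _ _ _ _ => I) rest0.
by exists a, b => x; rewrite -(ha x I); ring.
Qed.

Definition pos_functional (f : X -> R) := forall x, 0 <=: x -> 0 <= f x.

Lemma pos_lfun_mono {f} : lin_functional f -> pos_functional f ->
  {homo f : x y / x <=: y >-> x <= y}.
Proof. by move=> f_lin f_ge0 x y /subv_ge0/f_ge0; rewrite lfunB // subr_ge0. Qed.

Lemma riesz_hom_of_disjoint_zero {f} : lin_functional f -> pos_functional f ->
  (forall x y, 0 <=: x -> 0 <=: y -> x \wedge y = 0 -> f x = 0 \/ f y = 0) ->
  riesz_hom L f.
Proof.
move=> f_lin f_ge0 f_disj.
have f_meet0 z : f (z \wedge 0) = Num.min (f z) 0.
  have -> : z \wedge 0 = - vneg z by rewrite vjoinN opprK oppr0.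
  rewrite -[in f z](vpos_subneg z) lfunN // lfunB //.
  have := f_ge0 _ (vpos_ge0 z); have := f_ge0 _ (vneg_ge0 z).
  case: (f_disj _ _ (vpos_ge0 z) (vneg_ge0 z) (vmeet_pos_neg z)) => ->.
    by rewrite sub0r => fneg_ge0 _; rewrite min_l // oppr_le0.
  by rewrite !oppr0 addr0 => _ fpos_ge0; rewrite min_r.
have f_meet x y : f (x \wedge y) = Num.min (f x) (f y).
  have -> : x \wedge y = (x - y) \wedge 0 + y by rewrite -vmeetDr subrK add0r.
  by rewrite lfunD // f_meet0 lfunB // addr_minl add0r subrK.
split=> // x y; apply: (addrI (f (x \wedge y))).
by rewrite -lfunD // addrC addv_join_meet lfunD // f_meet addr_min_max.
Qed.

Lemma riesz_hom0 : riesz_hom L (fun=> 0).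
Proof. by split=> [a x y|x y|x y]; rewrite ?mulr0 ?addr0 ?maxxx ?minxx. Qed.

Lemma riesz_hom_vgcomb f x y : riesz_hom L f -> f (vgcomb x y) = gcomb (f x) (f y).
Proof. by case=> f_lin f_join f_meet; rewrite lfunD // !f_join !f_meet lfun0. Qed.

(** * Extension from the positive cone *)

Section ConeExtension.
Variable s : X -> R.
Hypothesis s_add : forall {x y}, 0 <=: x -> 0 <=: y -> s (x + y) = s x + s y.
Hypothesis s_scale : forall (a : R) x, 0 < a -> 0 <=: x -> s (a *: x) = a * s x.
Hypothesis s_ge0 : forall {x}, 0 <=: x -> 0 <= s x.

Definition cone_ext x := s (vpos x) - s (vneg x).

Lemma cone_ext_s0 : s 0 = 0.
Proof. by apply: (addrI (s 0)); rewrite -s_add // !addr0. Qed.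

Lemma cone_ext_sub x y : 0 <=: x -> 0 <=: y -> cone_ext (x - y) = s x - s y.
Proof.
move=> x0 y0; have e : vpos (x - y) + y = x + vneg (x - y).
  by rewrite vnegE opprB addrCA [x + (y - x)]addrCA subrr addr0.
by have := congr1 s e; rewrite !s_add // /cone_ext => ?; lra.
Qed.

Lemma cone_extE x : 0 <=: x -> cone_ext x = s x.
Proof. by move=> x0; rewrite -[x]subr0 cone_ext_sub // cone_ext_s0 !subr0. Qed.

Lemma cone_extD : {morph cone_ext : x y / x + y}.
Proof.
move=> x y; have -> : x + y = (vpos x + vpos y) - (vneg x + vneg y).
  by rewrite opprD addrACA !vpos_subneg.
by rewrite cone_ext_sub; try apply: addv_ge0; rewrite // !s_add // /cone_ext; lra.
Qed.

Lemma cone_extN : {morph cone_ext : x / - x}.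
Proof. by move=> x; rewrite -[x in LHS]vpos_subneg opprB cone_ext_sub // opprB. Qed.

Lemma cone_extZ (a : R) x : 0 < a -> cone_ext (a *: x) = a * cone_ext x.
Proof.
move=> a_gt0; have a_ge0 := ltW a_gt0.
rewrite -[x in LHS]vpos_subneg scalerBr cone_ext_sub; try exact: scalev_ge0.
by rewrite !s_scale // mulrBr.
Qed.

Lemma cone_ext_lin : lin_functional cone_ext.
Proof.
move=> a x y; rewrite cone_extD; congr (_ + _).
have [a_lt0|a_gt0|->] := ltgtP a 0; last by rewrite scale0r mul0r cone_extE //
  cone_ext_s0.
  rewrite -[a *: x]opprK -scalerN -scaleNr cone_extZ ?oppr_gt0 //.
  by rewrite cone_extN mulrNN.
exact: cone_extZ.
Qed.

Lemma cone_ext_ob : order_bounded L cone_ext.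
Proof.
move=> x y; exists (`|cone_ext x| + s (y - x)) => z xz zy.
have zx0 : 0 <=: z - x by apply/subv_ge0.
have yz0 : 0 <=: y - z by apply/subv_ge0.
have -> : cone_ext z = cone_ext x + s (z - x).
  by rewrite -cone_extE // -cone_extD addrC subrK.
have -> : y - x = (z - x) + (y - z) by rewrite [RHS]addrC addrA subrK.
rewrite (s_add zx0 yz0); have := s_ge0 zx0; have := s_ge0 yz0 => ? ?.
by apply: le_trans (ler_normD _ _) _; rewrite lerD2l ger0_norm //; lra.
Qed.

End ConeExtension.

(** * G-spaces and disjoint triples *)

Definition no_disjoint_triple (f : X -> R) := forall p q r,
  0 <=: p -> 0 <=: q -> 0 <=: r -> p \wedge q = 0 -> p \wedge r = 0 -> q \wedge r = 0 ->
  f p != 0 -> f q != 0 -> f r != 0 -> False.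

Section GSpace.
Context {l : X -> R} (l_lin : lin_functional l) (l_G : G_space L (kernel l)).

Lemma G_space_disjoint_eq {p q r} : 0 <=: p -> 0 <=: q -> 0 <=: r ->
  p \wedge q = 0 -> p \wedge r = 0 -> q \wedge r = 0 ->
  l q = l p -> `|l r| = `|l p| -> l p = 0.
Proof.
move=> p0 q0 r0 pq0 pr0 qr0 lqp /eqP; rewrite eqr_norm2; case: l_G => _ _ l_comb.
have ker_pq : kernel l (p - q) by rewrite /kernel lfunB // lqp subrr.
case/orP=> /eqP lrp.
  have ker_pr : kernel l (p - r) by rewrite /kernel lfunB // lrp subrr.
  have := l_comb _ _ ker_pq ker_pr; rewrite vgcomb_sub_disjoint //.
  by rewrite /kernel !lfunB // lqp lrp; lra.
have ker_pr : kernel l (p + r) by rewrite /kernel lfunD // lrp subrr.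
have := l_comb _ _ ker_pq ker_pr; rewrite vgcomb_subadd_disjoint //.
by rewrite /kernel lfunD // lfunB // lqp lrp; lra.
Qed.

Lemma G_space_no_unit_triple {p q r} : 0 <=: p -> 0 <=: q -> 0 <=: r ->
  p \wedge q = 0 -> p \wedge r = 0 -> q \wedge r = 0 ->
  `|l p| = 1 -> `|l q| = 1 -> `|l r| = 1 -> False.
Proof.
move=> p0 q0 r0 pq0 pr0 qr0 np nq nr.
have l_neq0 x : `|l x| = 1 -> l x <> 0.
  by move=> + lx0; rewrite lx0 normr0 => /esym/eqP; rewrite oner_eq0.
have [lqp|lqp] := eqVneq (l q) (l p).
  by apply: (l_neq0 p np); apply: (G_space_disjoint_eq p0 q0 r0); rewrite // nr np.
have [lrp|lrp] := eqVneq (l r) (l p).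
  apply: (l_neq0 p np); apply: (G_space_disjoint_eq p0 r0 q0) => //.
    by rewrite vmeetC.
  by rewrite nq np.
have opp x : `|l x| = 1 -> l x != l p -> l x = - l p.
  move=> nx lxp; move: (eqr_norm2 (l x) (l p)).
  by rewrite nx np eqxx (negbTE lxp) => /esym /eqP.
apply: (l_neq0 q nq); apply: (G_space_disjoint_eq q0 r0 p0) => //.
- by rewrite vmeetC.
- by rewrite vmeetC.
- by rewrite (opp r nr lrp) (opp q nq lqp).
- by rewrite np nq.
Qed.

Lemma G_space_no_disjoint_triple : no_disjoint_triple l.
Proof.
have scale_ge0 x : 0 <= `|l x|^-1 by rewrite invr_ge0.
have normalize x : l x != 0 -> `|l (`|l x|^-1 *: x)| = 1.
  move=> lx; rewrite lfunZ // normrM normrV ?unitfE ?normr_eq0 // normr_id.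
  by rewrite mulVf ?normr_eq0.
move=> p q r p0 q0 r0 pq0 pr0 qr0 lp lq lr.
apply: (G_space_no_unit_triple (scalev_ge0 (scale_ge0 p) p0)
  (scalev_ge0 (scale_ge0 q) q0) (scalev_ge0 (scale_ge0 r) r0)); try exact: normalize.
all: exact: disjointZ.
Qed.

End GSpace.

Lemma G_space_kernel_riesz_comb {l phi psi} {a b : R} :
  riesz_hom L phi -> riesz_hom L psi ->
  (forall x, l x = a * phi x + b * psi x) -> G_space L (kernel l).
Proof.
move=> phi_h psi_h l_ab; have [phi_lin _ _] := phi_h; have [psi_lin _ _] := psi_h.
have l_lin : lin_functional l.
  by move=> c x y; rewrite !l_ab; exact: (lin_functional_comb a b phi_lin psi_lin).
split=> [|c x y|x y]; rewrite /kernel.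
- exact: lfun0.
- by move=> lx ly; rewrite l_lin lx ly mulr0 addr0.
by move=> lx ly; rewrite l_ab !riesz_hom_vgcomb // gcomb_lin_eq0 // -l_ab.
Qed.

(** * The modulus *)

(* The Riesz-Kantorovich formula for l⁺ on the positive cone. *)
Definition lpos (l : X -> R) x := sup (l @` [set w | 0 <=: w /\ w <=: x]).

Section Modulus.
Context {l m : X -> R} (l_ob : order_bounded_functional L l) (m_mod : is_modulus L l m).
Let l_lin : lin_functional l := l_ob.1.
Local Notation lpos := (lpos l).

Lemma lpos_ub {x w} : 0 <=: w -> w <=: x -> l w <= lpos x.
Proof.
move=> w0 wx; have [M lM] := l_ob.2 0 x.
apply: ub_le_sup; last by exists w.
by exists M => _ [w' [w'0 w'x] <-]; apply: le_trans (ler_norm _) (lM _ w'0 w'x).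
Qed.

Lemma lpos_least {x c} : 0 <=: x ->
  (forall w, 0 <=: w -> w <=: x -> l w <= c) -> lpos x <= c.
Proof.
move=> x0 lc; apply: ge_sup; first by exists (l 0), 0.
by move=> _ [w [w0 wx] <-]; apply: lc.
Qed.

Lemma lpos_ge0 {x} : 0 <=: x -> 0 <= lpos x.
Proof. by move=> x0; rewrite -(lfun0 l_lin); apply: lpos_ub. Qed.

Lemma lposD x y : 0 <=: x -> 0 <=: y -> lpos (x + y) = lpos x + lpos y.
Proof.
move=> x0 y0; apply/eqP; rewrite eq_le; apply/andP; split.
  apply: lpos_least => [|w w0 wxy]; first exact: addv_ge0.
  have -> : w = w \wedge x + (w - w \wedge x) by rewrite addrC subrK.
  rewrite lfunD //; apply: lerD.
    by apply: lpos_ub; [apply: vmeet_ge0|apply: vmeet_lbr].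
  apply: lpos_ub; first by apply/subv_ge0; apply: vmeet_lbl.
  by rewrite -vpos_sub; apply: vjoin_least => //; apply/vleBlDr; rewrite addrC.
rewrite -lerBrDr; apply: lpos_least => // w1 w10 w1x.
rewrite lerBrDr addrC -lerBrDr; apply: lpos_least => // w2 w20 w2y.
by rewrite lerBrDr addrC -lfunD //; apply: lpos_ub; [apply: addv_ge0|apply: vle_add2].
Qed.

Lemma lposZ (a : R) x : 0 < a -> 0 <=: x -> lpos (a *: x) = a * lpos x.
Proof.
move=> a_gt0 x0; have a_ge0 := ltW a_gt0; have a_neq0 : a != 0 by rewrite gt_eqF.
apply/eqP; rewrite eq_le; apply/andP; split.
  apply: lpos_least => [|w w0 wax]; first exact: scalev_ge0.
  rewrite -[w](scalerKV a_neq0) lfunZ // ler_pM2l //; apply: lpos_ub.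
    by apply: scalev_ge0; rewrite ?invr_ge0.
  by apply/(vle_pscale2 _ _ _ a_gt0); rewrite scalerKV.
rewrite -ler_pdivlMl //; apply: lpos_least => // w w0 wx.
by rewrite ler_pdivlMl // -lfunZ //; apply: lpos_ub; [apply: scalev_ge0|apply: vle_scale].
Qed.

Lemma cone_ext_lpos_obf : order_bounded_functional L (cone_ext lpos).
Proof.
by split; [exact: (cone_ext_lin _ lposD lposZ)|exact: (cone_ext_ob _ lposD (@lpos_ge0))].
Qed.

Lemma modulus_ge_norm {x} : 0 <=: x -> `|l x| <= m x.
Proof.
by case: m_mod => _ lm Nlm _ x0; rewrite ler_norml; have := lm x x0;
  have := Nlm x x0; lra.
Qed.

Lemma modulus_le0 {u} : 0 <=: u ->
  (forall w, 0 <=: w -> w <=: u -> l w = 0) -> m u <= 0.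
Proof.
move=> u0 l0; case: m_mod => _ _ _ m_least.
have [lpos_lin lpos_ob] := cone_ext_lpos_obf.
(* g = l⁺ + l⁻ dominates l and -l, hence |l|. *)
pose g x := 2 * cone_ext lpos x + (-1) * l x.
have g_obf : order_bounded_functional L g.
  split; [exact: (lin_functional_comb 2 (-1) lpos_lin l_lin)|].
  exact: (order_bounded_comb 2 (-1) lpos_ob l_ob.2).
have lposE x : 0 <=: x -> cone_ext lpos x = lpos x.
  by apply: cone_extE; exact: lposD.
have lg : func_le L l g.
  by move=> x x0; rewrite /g lposE //; have := lpos_ub x0 (vle_refl L x); lra.
have Nlg : func_le L (fun x => - l x) g.
  by move=> x x0; rewrite /g lposE //; have := lpos_ge0 x0; lra.
have := m_least g g_obf lg Nlg u u0; rewrite /g lposE // l0 //.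
have : lpos u <= 0 by apply: lpos_least => // w w0 wu; rewrite l0.
lra.
Qed.

Lemma modulus_ge0 : pos_functional m.
Proof. by move=> x x0; apply: le_trans (normr_ge0 _) (modulus_ge_norm x0). Qed.

Lemma modulus_no_disjoint_triple : no_disjoint_triple l -> no_disjoint_triple m.
Proof.
move=> l_triple p q r p0 q0 r0 pq0 pr0 qr0 mp mq mr.
have witness x : 0 <=: x -> m x != 0 -> exists w, [/\ 0 <=: w, w <=: x & l w != 0].
  move=> x0 mx_neq0; apply: contrapT => no_w; move: mx_neq0.
  rewrite eq_le modulus_ge0 // andbT (modulus_le0 x0) // => w w0 wx.
  by have [//|lw_neq0] := eqVneq (l w) 0; exfalso; apply: no_w; exists w.
have [p' [p'0 p'p lp']] := witness p p0 mp.
have [q' [q'0 q'q lq']] := witness q q0 mq.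
have [r' [r'0 r'r lr']] := witness r r0 mr.
by apply: (l_triple p' q' r') => //; [apply: (disjointW pq0)|apply: (disjointW pr0)|
  apply: (disjointW qr0)].
Qed.

Lemma modulus_riesz_sum_span {phi psi} : riesz_hom L phi -> riesz_hom L psi ->
  (forall x, m x = phi x + psi x) -> exists a b, forall x, l x = a * phi x + b * psi x.
Proof.
move=> phi_h psi_h m_sum; have [phi_lin phi_join _] := phi_h.
have [psi_lin psi_join _] := psi_h.
apply: lin_functional_span2 => // x phix psix.
have vpos0 y : phi y = 0 -> psi y = 0 -> l (vpos y) = 0.
  move=> phiy psiy; apply/normr0_eq0/eqP; rewrite eq_le normr_ge0 andbT.
  by have := modulus_ge_norm (vpos_ge0 y); rewrite m_sum phi_join psi_join phiy psiy
    !lfun0 // maxxx addr0.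
rewrite -(vpos_subneg x) lfunB // vpos0 // vpos0 ?subrr //.
  by rewrite lfunN // phix oppr0.
by rewrite lfunN // psix oppr0.
Qed.

End Modulus.

(** * Splitting along two disjoint elements *)

Definition component (f : X -> R) u x := sup (range (fun t : R => f (x \wedge t *: u))).

Section Decomposition.
Context {f : X -> R} (f_lin : lin_functional f) (f_ge0 : pos_functional f).
Context (f_triple : no_disjoint_triple f).
Let f_mono := pos_lfun_mono f_lin f_ge0.

Lemma component_ub u x t : f (x \wedge t *: u) <= component f u x.
Proof.
apply: ub_le_sup; last by exists t.
by exists (f x) => _ [s _ <-]; apply: f_mono.
Qed.

Lemma component_ge0 u x : 0 <=: x -> 0 <= component f u x.
Proof.
move=> x0; apply: le_trans (component_ub u x 0); rewrite scale0r vmeetC vmeet_l //.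
by rewrite lfun0.
Qed.

Lemma vpos_excess_eq0 {x y z} : 0 <=: x -> 0 <=: y -> 0 <=: z -> y \wedge z = 0 ->
  f x < f y -> f x < f z -> f (vpos (x - (y + z))) = 0.
Proof.
move=> x0 y0 z0 yz0 xy xz.
(* (y - x)⁺, (z - x)⁺ and the excess are pairwise disjoint. *)
have [//|fw_neq0] := eqVneq (f (vpos (x - (y + z)))) 0; exfalso.
have excess_le a : 0 <=: a -> vpos (a - x) <=: a.
  by move=> a0; apply: vjoin_least => //; apply/vleBlDr; apply: vle_wpDr.
have excess_neq0 a : f x < f a -> f (vpos (a - x)) != 0.
  move=> xa; rewrite gt_eqF // (lt_le_trans _ (f_mono _ _ (vjoin_ubl L (a - x) 0))) //.
  by rewrite lfunB // subr_gt0.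
have sub_le a b : 0 <=: b -> x - (a + b) <=: x - a.
  by move=> b0; apply: vle_addl; apply/vle_opp; apply: vle_wpDr.
apply: (f_triple (vpos (y - x)) (vpos (z - x)) _ _ _ _ _ _ _ _ _ fw_neq0) => //.
- exact: disjointW yz0 _ _ (excess_le _ y0) (excess_le _ z0).
- by rewrite -opprB; apply: vneg_vpos_disjoint; apply: sub_le.
- by rewrite -opprB; apply: vneg_vpos_disjoint; rewrite [y + z]addrC; apply: sub_le.
- exact: excess_neq0.
- exact: excess_neq0.
Qed.

Section DisjointPair.
Context {u v : X} (u0 : 0 <=: u) (v0 : 0 <=: v) (uv0 : u \wedge v = 0).
Context (fu_gt0 : 0 < f u) (fv_gt0 : 0 < f v).

Lemma meet_split_eventually {x} : 0 <=: x -> exists t0, forall t, t0 <= t ->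
  f x = f (x \wedge t *: u) + f (x \wedge t *: v).
Proof.
move=> x0; have fx_ge0 := f_ge0 _ x0.
have xu_ge0 : 0 <= f x / f u by rewrite divr_ge0 // ltW.
have xv_ge0 : 0 <= f x / f v by rewrite divr_ge0 // ltW.
exists (f x / f u + f x / f v + 1) => t t_ge.
have t_ge0 : 0 <= t by lra.
have xtu : f x < f (t *: u) by rewrite lfunZ // -ltr_pdivrMr //; lra.
have xtv : f x < f (t *: v) by rewrite lfunZ // -ltr_pdivrMr //; lra.
have tu0 := scalev_ge0 t_ge0 u0; have tv0 := scalev_ge0 t_ge0 v0.
have tuv0 := disjointZ t_ge0 t_ge0 u0 v0 uv0.
have := vpos_excess_eq0 x0 tu0 tv0 tuv0 xtu xtv.
by rewrite vpos_sub vmeetD_disjoint // lfunB // lfunD // => ?; lra.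
Qed.

Lemma component_eventually {x} : 0 <=: x -> exists t0, forall t, t0 <= t ->
  component f u x = f (x \wedge t *: u).
Proof.
move=> x0; have [t0 f_split] := meet_split_eventually x0; exists t0.
have mono w : 0 <=: w -> {homo (fun t => f (x \wedge t *: w)) : s t / s <= t}.
  by move=> w0 s t st; apply: f_mono; apply: vmeet_scale_mono.
have const t : t0 <= t -> f (x \wedge t *: u) = f (x \wedge t0 *: u).
  move=> t_ge; have := mono _ u0 _ _ t_ge; have := mono _ v0 _ _ t_ge.
  by rewrite /= => ? ?; have := f_split t t_ge; have := f_split t0 (lexx _); lra.
by move=> t t_ge; rewrite /component (sup_range_eventually_const (mono _ u0) const)
  const.
Qed.

Lemma component_add x y : 0 <=: x -> 0 <=: y ->
  component f u (x + y) = component f u x + component f u y.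
Proof.
move=> x0 y0; have [tx cx] := component_eventually x0.
have [ty cy] := component_eventually y0.
have [txy cxy] := component_eventually (addv_ge0 x0 y0).
set t := Num.max (Num.max tx ty) (Num.max txy 0).
have [tx_le [ty_le [txy_le t_ge0]]] : [/\ tx <= t, ty <= t, txy <= t & 0 <= t].
  by rewrite !le_max !lexx !orbT.
have tu0 := scalev_ge0 t_ge0 u0.
apply/eqP; rewrite eq_le (cx t) // (cy t) // -lfunD //; apply/andP; split.
  by rewrite (cxy t) //; apply: f_mono; rewrite !(vmeetC _ (t *: u)); apply: vmeetDr_le.
apply: le_trans (component_ub u _ (t + t)); apply: f_mono.
by apply: vmeet_greatest; rewrite ?scalerDl; apply: vle_add2.
Qed.

Lemma component_scale (a : R) x : 0 < a -> 0 <=: x ->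
  component f u (a *: x) = a * component f u x.
Proof.
move=> a_gt0 x0; have a_neq0 : a != 0 by rewrite gt_eqF.
have [t1 cax] := component_eventually (scalev_ge0 (ltW a_gt0) x0).
have [t0 cx] := component_eventually x0.
set t := Num.max t1 (a * t0).
have [t1_le at0_le] : t1 <= t /\ a * t0 <= t by rewrite !le_max !lexx !orbT.
rewrite (cax t) // (cx (t / a)); last by rewrite ler_pdivlMr // mulrC.
by rewrite -lfunZ // vmeetZ ?ltW // scalerA mulrC divfK.
Qed.

Lemma component_riesz_hom : riesz_hom L (cone_ext (component f u)).
Proof.
apply: riesz_hom_of_disjoint_zero => [|x x0|x y x0 y0 xy0].
- exact: (cone_ext_lin _ component_add component_scale).
- by rewrite (cone_extE _ component_add) //; apply: component_ge0.
rewrite !(cone_extE _ component_add) //.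
have [|cx_neq0] := eqVneq (component f u x) 0; first by left.
right; have [//|cy_neq0] := eqVneq (component f u y) 0; exfalso.
have [tx cx] := component_eventually x0; have [ty cy] := component_eventually y0.
set t := Num.max (Num.max tx ty) 0.
have [tx_le [ty_le t_ge0]] : [/\ tx <= t, ty <= t & 0 <= t] by rewrite !le_max !lexx !orbT.
have tu0 := scalev_ge0 t_ge0 u0.
have tuv0 : t *: u \wedge v = 0 by rewrite -[v]scale1r; apply: disjointZ.
apply: (f_triple (x \wedge t *: u) (y \wedge t *: u) v) => //; try exact: vmeet_ge0.
- by apply: (disjointW xy0); try apply: vmeet_ge0.
- by apply: (disjointW tuv0); try apply: vmeet_ge0.
- by apply: (disjointW tuv0); try apply: vmeet_ge0.
- by rewrite -(cx t).
- by rewrite -(cy t).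
- by rewrite gt_eqF.
Qed.

End DisjointPair.

Lemma component_split {u v x} : 0 <=: u -> 0 <=: v -> u \wedge v = 0 ->
  0 < f u -> 0 < f v -> 0 <=: x -> f x = component f u x + component f v x.
Proof.
move=> u0 v0 uv0 fu fv x0.
have [t0 f_split] := meet_split_eventually u0 v0 uv0 fu fv x0.
have [tu cu] := component_eventually u0 v0 uv0 fu fv x0.
have vu0 : v \wedge u = 0 by rewrite vmeetC.
have [tv cv] := component_eventually v0 u0 vu0 fv fu x0.
set t := Num.max (Num.max t0 tu) tv.
have [t0_le [tu_le tv_le]] : [/\ t0 <= t, tu <= t & tv <= t] by rewrite !le_max !lexx !orbT.
by rewrite (cu t) // (cv t) // -f_split.
Qed.

Theorem riesz_sum_of_no_disjoint_triple : exists phi psi : X -> R,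
  [/\ riesz_hom L phi, riesz_hom L psi & forall x, f x = phi x + psi x].
Proof.
have [[u [v [u0 v0 uv0 fu fv]]]|no_pair] :=
  pselect (exists u v, [/\ 0 <=: u, 0 <=: v, u \wedge v = 0, 0 < f u & 0 < f v]).
  exists (cone_ext (component f u)), (cone_ext (component f v)); split.
  - exact: (component_riesz_hom u0 v0 uv0 fu fv).
  - by apply: (component_riesz_hom v0 u0 _ fv fu); rewrite vmeetC.
  move=> x; rewrite /cone_ext -{1}(vpos_subneg x) lfunB //.
  by rewrite !(component_split u0 v0 uv0 fu fv) //; lra.
exists f, (fun=> 0); split; [|exact: riesz_hom0|by move=> x; rewrite addr0].
apply: riesz_hom_of_disjoint_zero => // x y x0 y0 xy0.
have [|fx_neq0] := eqVneq (f x) 0; first by left.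
right; have [//|fy_neq0] := eqVneq (f y) 0; exfalso; apply: no_pair; exists x, y.
by split=> //; rewrite lt_def ?fx_neq0 ?fy_neq0 f_ge0.
Qed.

End Decomposition.

End VectorLattice.

Theorem lemma4 (R : realType) (X : lmodType R) (L : vector_lattice X)
    (l : X -> R) (hl : order_bounded_functional L l)
    (m : X -> R) (hm : is_modulus L l m) :
  G_space L (kernel l) <->
  exists phi psi : X -> R,
    [/\ riesz_hom L phi, riesz_hom L psi & forall x, m x = phi x + psi x].
Proof.
have [[m_lin _] _ _ _] := hm.
split=> [l_G|[phi [psi [phi_h psi_h m_sum]]]].
  apply: (riesz_sum_of_no_disjoint_triple L m_lin (modulus_ge0 L hm)).
  exact/(modulus_no_disjoint_triple L hl hm)/(G_space_no_disjoint_triple L hl.1 l_G).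
have [a [b l_ab]] := modulus_riesz_sum_span L hl hm phi_h psi_h m_sum.
exact: (G_space_kernel_riesz_comb L phi_h psi_h l_ab).
Qed.
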